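(* Let $1\leq c\leq d$ be integers with $c\equiv i\pmod 5$, $d\equiv j\pmod 5$, $0\le i,j\le 4$, and let $a$ be one of the values $a_{ij}$ listed below (with $a_{ij}:=a_{ji}$ when $i>j$): $(0,0)\!:1,2,3,4$; $(0,1)\!:2,3,4$; $(0,2)\!:1,3,4$; $(0,3)\!:1,2,4$; $(0,4)\!:1,2,3$; $(1,1)\!:3,4$; $(1,2)\!:4$; $(1,3)\!:2$; $(1,4)\!:2,3$; $(2,2)\!:1,3$; $(2,3)\!:1,4$; $(2,4)\!:3$; $(3,3)\!:2,4$; $(3,4)\!:1$; $(4,4)\!:1,2$. Then for every $n\ge 0$ and every $0\le k\le 4$, \[ N_{[c,d]}(k,5,5n+a)=\frac{p_{[c^2d^2]}(5n+a)}{5}, \] and in particular $p_{[c^2d^2]}(5n+a)\equiv 0\pmod 5$.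
   Context: A 4-colored partition of type $(c,d)$ of $n$ is a quadruple $(\pi_r,\pi_b,\pi_y,\pi_o)$ of ordinary partitions with total sum of parts $n$, such that all parts of $\pi_r,\pi_b$ are divisible by $c$ and all parts of $\pi_y,\pi_o$ are divisible by $d$. Their number is $p_{[c^2d^2]}(n)$, i.e. $\sum_n p_{[c^2d^2]}(n)q^n=\prod_{k\ge1}(1-q^{ck})^{-2}(1-q^{dk})^{-2}$. The 4-colored rank is $r_4=\ell(\pi_r)-\ell(\pi_b)+\ell(\pi_y)-\ell(\pi_o)$, where $\ell$ is the number of parts. $N_{[c,d]}(k,5,n)$ denotes the number of 4-colored partitions of $n$ of type $(c,d)$ with $r_4\equiv k\pmod 5$. *)

From mathcomp Require Import all_boot all_algebra.
Set Implicit Arguments. Unset Strict Implicit. Unset Printing Implicit Defensive.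
Import GRing.Theory Num.Theory.

(* An ordinary partition whose parts are all <= N (and with at most N parts of
   each size) is encoded by its multiplicity function:
   mult i = number of parts equal to i.+1.  Every partition of any m <= N
   is faithfully represented in this type. *)
Definition mpart (N : nat) := {ffun 'I_N -> 'I_N.+1}.

Definition psum N (m : mpart N) : nat := \sum_(i < N) i.+1 * m i.
Definition plen N (m : mpart N) : nat := \sum_(i < N) (m i : nat).
Definition pdiv N (c : nat) (m : mpart N) : bool :=
  [forall i : 'I_N, (0 < m i) ==> (c %| i.+1)].

Definition quad N := (mpart N * mpart N * mpart N * mpart N)%type.
Definition q_r N (q : quad N) := q.1.1.1.
Definition q_b N (q : quad N) := q.1.1.2.
Definition q_y N (q : quad N) := q.1.2.
Definition q_o N (q : quad N) := q.2.

Definition colored4 (c d n : nat) : {set quad n} :=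
  [set q : quad n | [&& pdiv c (q_r q), pdiv c (q_b q), pdiv d (q_y q),
     pdiv d (q_o q) &
     psum (q_r q) + psum (q_b q) + psum (q_y q) + psum (q_o q) == n]].

Definition rank4 N (q : quad N) : int :=
  ((plen (q_r q))%:Z - (plen (q_b q))%:Z + (plen (q_y q))%:Z
   - (plen (q_o q))%:Z)%R.

Definition p_c2d2 (c d n : nat) : nat := #|colored4 c d n|.

Definition N_cd (c d k n : nat) : nat :=
  #|[set q in colored4 c d n | (rank4 q == k%:Z %[mod 5])%Z]|.

Definition a_tbl (i j : nat) : seq nat :=
  match i, j with
  | 0, 0 => [:: 1; 2; 3; 4]
  | 0, 1 => [:: 2; 3; 4]
  | 0, 2 => [:: 1; 3; 4]
  | 0, 3 => [:: 1; 2; 4]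
  | 0, 4 => [:: 1; 2; 3]
  | 1, 1 => [:: 3; 4]
  | 1, 2 => [:: 4]
  | 1, 3 => [:: 2]
  | 1, 4 => [:: 2; 3]
  | 2, 2 => [:: 1; 3]
  | 2, 3 => [:: 1; 4]
  | 2, 4 => [:: 3]
  | 3, 3 => [:: 2; 4]
  | 3, 4 => [:: 1]
  | 4, 4 => [:: 1; 2]
  | _, _ => [::]
  end.

Definition a_vals (i j : nat) : seq nat :=
  if i <= j then a_tbl i j else a_tbl j i.

(** Weight a 4-colored partition by z^(r_4), z a primitive fifth root of unity.
    The generating function is F_c F_d, where
    F_c = prod_(c | m) 1/((1 - z q^m)(1 - z^-1 q^m))
        = prod_(c | m) (1 - q^m)(1 - z^2 q^m)(1 - z^3 q^m) / (1 - q^(5m)).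
    By the Jacobi triple product, prod_(m >= 1) (1 - q^m)(1 - z^2 q^m)(1 - z^3 q^m)
    is a constant times sum_j (-z^2)^j q^(j(j+1)/2). Triangular numbers are 0, 1 or
    3 mod 5, and the terms with exponent 3 mod 5 cancel in pairs j, -1-j, so only
    exponents 0 and 1 mod 5 survive. Hence F_c only has exponents 0 and c mod 5,
    and F_c F_d has no term q^(5n+a) when a avoids {0, c, d, c+d} mod 5. This holds
    for each of the four primitive fifth roots, so finite Fourier inversion shows
    that the five residue classes of r_4 are equinumerous. *)

From Pilot Require Import Defs.
From mathcomp Require Import all_boot all_algebra all_field.
From mathcomp Require Import zify ring.
Import GRing.Theory Num.Theory.

Set Implicit Arguments.
Unset Strict Implicit.
Unset Printing Implicit Defensive.

Local Open Scope ring_scope.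

(** * Truncated power series *)

Section EqUpto.
Variable R : nzRingType.
Implicit Types (p q r s : {poly R}) (n : nat).

(* Power series are represented by polynomials and compared up to degree n. *)
Definition eq_upto n p q := forall m, (m <= n)%N -> p`_m = q`_m.

Lemma eq_upto_sym n p q : eq_upto n p q -> eq_upto n q p.
Proof. by move=> epq m lemn; rewrite epq. Qed.

Lemma eq_upto_trans n p q r : eq_upto n p q -> eq_upto n q r -> eq_upto n p r.
Proof. by move=> epq eqr m lemn; rewrite epq ?eqr. Qed.

Lemma eq_uptoM n p p' q q' :
  eq_upto n p p' -> eq_upto n q q' -> eq_upto n (p * q) (p' * q').
Proof.
move=> ep eq m lemn; rewrite !coefM; apply: eq_bigr => i _.
have lein : (i <= n)%N by rewrite (leq_trans _ lemn) // -ltnS.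
by rewrite ep // eq // (leq_trans (leq_subr _ _) lemn).
Qed.

Lemma eq_uptoZ n c p p' : eq_upto n p p' -> eq_upto n (c *: p) (c *: p').
Proof. by move=> ep m lemn; rewrite !coefZ ep. Qed.

Lemma eq_upto_sum n (I : Type) (r : seq I) (P : pred I) (F G : I -> {poly R}) :
  (forall i, P i -> eq_upto n (F i) (G i)) ->
  eq_upto n (\sum_(i <- r | P i) F i) (\sum_(i <- r | P i) G i).
Proof.
move=> eFG; apply: big_ind2 => // p p' q q' ep eq m lemn.
by rewrite !coefD ep ?eq.
Qed.

Lemma eq_upto_prod n (I : Type) (r : seq I) (P : pred I) (F G : I -> {poly R}) :
  (forall i, P i -> eq_upto n (F i) (G i)) ->
  eq_upto n (\prod_(i <- r | P i) F i) (\prod_(i <- r | P i) G i).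
Proof. by move=> eFG; apply: big_ind2 => // *; apply: eq_uptoM. Qed.

Lemma eq_upto_XnM n k p : (n < k)%N -> eq_upto n ('X^k * p) 0.
Proof. by move=> ltnk m lemn; rewrite coefXnM coef0 (leq_ltn_trans lemn ltnk). Qed.

Lemma eq_upto_addXnM n k p q : (n < k)%N -> eq_upto n (p + 'X^k * q) p.
Proof. by move=> ltnk m lemn; rewrite coefD (eq_upto_XnM _ ltnk) // coef0 addr0. Qed.

Lemma eq_upto_mul0 n p r : p`_0 = 1 -> eq_upto n (p * r) 0 -> eq_upto n r 0.
Proof.
move=> p0_1 epr; elim: n => [|n IHn] in epr * => m.
  by rewrite leqn0 => /eqP->; have := epr 0%N isT; rewrite coef0M p0_1 mul1r.
have IHr : eq_upto n r 0 by apply: IHn => k /leqW; apply: epr.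
rewrite leq_eqVlt ltnS => /predU1P[->|]; last exact: IHr.
have := epr n.+1 (leqnn _); rewrite coefMr big_ord_recr /= subnn p0_1 mul1r.
by rewrite big1 ?add0r // => i _; rewrite IHr ?coef0 ?mulr0 // -ltnS.
Qed.

Lemma eq_upto_cancel n p r s :
  p`_0 = 1 -> eq_upto n (p * r) (p * s) -> eq_upto n r s.
Proof.
move=> p0_1 eprs; suff ers0 : eq_upto n (r - s) 0.
  by move=> m lemn; apply/eqP; rewrite -subr_eq0 -coefB ers0 ?coef0.
by apply: (eq_upto_mul0 p0_1) => m lemn; rewrite mulrBr coefB eprs ?subrr ?coef0.
Qed.

Lemma eq_upto_prod_ord n M (F : nat -> {poly R}) :
  (n <= M)%N -> (forall k, (n <= k)%N -> eq_upto n (F k) 1) ->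
  eq_upto n (\prod_(k < M) F k) (\prod_(k < n) F k).
Proof.
move=> lenM eF1; rewrite -(subnKC lenM); elim: (M - n)%N => [|d IHd].
  by rewrite addn0.
rewrite addnS big_ord_recr /= -[X in eq_upto _ _ X]mulr1.
by apply: eq_uptoM => //; apply/eF1/leq_addr.
Qed.

End EqUpto.

(** * A finite Jacobi triple product *)

Lemma coef_comp_scaleX (R : comNzRingType) (a : R) (p : {poly R}) i :
  (p \Po (a *: 'X))`_i = a ^+ i * p`_i.
Proof.
rewrite -mul_polyC; elim/poly_ind: p i => [|p c IHp] i.
  by rewrite comp_poly0 !coef0 mulr0.
rewrite comp_poly_MXaddC !coefD !coefC coefMX mulrA coefMX.
case: i => [|i] /=; first by rewrite mul1r add0r.
by rewrite !addr0 coefMC IHp exprSr mulrAC.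
Qed.

Section FiniteTripleProduct.
Variable R : idomainType.
Local Notation q := ('X : {poly R}).

Definition qpoch m : {poly R} := \prod_(k < m) (1 - q ^+ k.+1).

(* x^N prod_(k=1..N) (1 + x q^k)(1 + x^-1 q^(k-1)), with x = 'X and q the inner
   variable *)
Definition jtp N : {poly {poly R}} :=
  \prod_(k < N) (1 + q ^+ k.+1 *: 'X) * \prod_(k < N) ('X + (q ^+ k)%:P).

(* j(j+1)/2 for j = i - N *)
Definition jtp_exp N i :=
  if (N <= i)%N then 'C((i - N).+1, 2) else 'C(N - i, 2).

Lemma bin2S m : 'C(m.+1, 2) = ('C(m, 2) + m)%N.
Proof. by rewrite binS bin1. Qed.

Lemma jtp_expS N i : (0 < N)%N -> (jtp_exp N i.+1 + N.-1 = jtp_exp N i + i)%N.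
Proof.
rewrite /jtp_exp => N_gt0; case: (leqP N i) => [leNi|ltiN].
  by rewrite leqW // subSn // bin2S; lia.
case: leqP => [leNi1|ltNi1].
  have -> : N = i.+1 by lia.
  by rewrite subnn subSnn.
by rewrite -[(N - i)%N]prednK ?subn_gt0 // bin2S -subnS; lia.
Qed.

Lemma jtp_exp_sym N i : (i < 2 * N)%N -> jtp_exp N (2 * N - i.+1) = jtp_exp N i.
Proof.
rewrite /jtp_exp => lti2N; case: (leqP N i) => leNi.
  by rewrite ifN -?ltnNge; [congr binomial; lia | lia].
by rewrite ifT; [congr binomial; lia | lia].
Qed.

Lemma jtp_exp_max N : jtp_exp N (2 * N) = 'C(N.+1, 2).
Proof. by rewrite /jtp_exp ifT ?leq_pmull //; congr binomial; lia. Qed.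

Lemma jtp_exp_gt n N i : (2 * n + 2 <= N)%N -> (i < n)%N || (2 * N - i < n)%N ->
  (n < jtp_exp N i)%N.
Proof.
rewrite /jtp_exp => leN /orP[] lt_in; case: (leqP N i) => leNi; try lia.
  by rewrite -[(N - i)%N]prednK ?subn_gt0 // bin2S; lia.
by rewrite bin2S; lia.
Qed.

Lemma jtp_comp_qX N : (0 < N)%N ->
  ('X + (q ^+ N.-1)%:P) * (jtp N \Po (q *: 'X)) =
  (q ^+ N.-1)%:P * (1 + q ^+ N.+1 *: 'X) * jtp N.
Proof.
case: N => // n _; rewrite /jtp comp_polyM /=.
set L := \prod_(k < n.+1) _; set M := \prod_(k < n.+1) _.
have shiftL : (1 + q *: 'X) * (L \Po (q *: 'X)) = L * (1 + q ^+ n.+2 *: 'X).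
  rewrite rmorph_prod.
  under eq_bigr do rewrite rmorphD rmorph1 /= linearZ /= comp_polyX scalerA -exprSr.
  transitivity (\prod_(k < n.+2) (1 + q ^+ k.+1 *: 'X)).
    by rewrite big_ord_recl expr1.
  by rewrite big_ord_recr.
have shiftM : ('X + (q ^+ n)%:P) * (M \Po (q *: 'X)) = (q ^+ n)%:P * (1 + q *: 'X) * M.
  rewrite rmorph_prod.
  under eq_bigr do rewrite rmorphD /= comp_polyX comp_polyC.
  rewrite big_ord_recl /M big_ord_recr /= expr0 addrC.
  under eq_bigr do rewrite exprS rmorphM /= -mul_polyC -mulrDr.
  by rewrite big_split /= prodr_const card_ord rmorphXn /=; ring.
set Lq := L \Po _ in shiftL *; set Mq := M \Po _ in shiftM *.
rewrite mulrCA shiftM.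
have -> : Lq * ((q ^+ n)%:P * (1 + q *: 'X) * M) = (q ^+ n)%:P * ((1 + q *: 'X) * Lq) * M.
  by ring.
by rewrite shiftL; ring.
Qed.

Lemma jtp_coef_rec N i : (0 < N)%N ->
  q ^+ N.-1 * (1 - q ^+ i.+1) * (jtp N)`_i.+1 = (q ^+ i - q ^+ (2 * N)) * (jtp N)`_i.
Proof.
move=> N_gt0; have := congr1 (fun p : {poly {poly R}} => p`_i.+1) (jtp_comp_qX N_gt0).
rewrite /= mulrDl coefD coefXM coefCM !coef_comp_scaleX -mulrA mulrDl mul1r.
rewrite coefCM coefD -scalerAl coefZ coefXM /=.
set c := q ^+ N.-1; set b := q ^+ N.+1; set t0 := _`_i; set t1 := _`_i.+1 => recE.
have -> : q ^+ (2 * N) = c * b by rewrite -exprD; congr (_ ^+ _); lia.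
apply/eqP; rewrite -subr_eq0; apply/eqP.
transitivity (c * (t1 + b * t0) - (q ^+ i * t0 + c * (q ^+ i.+1 * t1))); first by ring.
by rewrite recE subrr.
Qed.

Lemma jtp_coef0 N : (jtp N)`_0 = q ^+ 'C(N, 2).
Proof.
rewrite /jtp -horner_coef0 hornerM !horner_prod big1 ?mul1r => [|k _]; last first.
  by rewrite hornerD hornerZ hornerX mulr0 addr0 hornerC.
under eq_bigr do rewrite hornerD hornerX hornerC add0r.
by rewrite prodrXr -bin2_sum big_mkord.
Qed.

Lemma qpochS m : qpoch m.+1 = qpoch m * (1 - q ^+ m.+1).
Proof. by rewrite /qpoch big_ord_recr. Qed.

Lemma qpoch_coef0 m : (qpoch m)`_0 = 1.
Proof.
rewrite -horner_coef0 horner_prod big1 // => k _.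
by rewrite hornerD hornerN hornerC hornerXn expr0n subr0.
Qed.

Lemma one_subXn_neq0 k : (0 < k)%N -> 1 - q ^+ k != 0.
Proof.
move=> k_gt0; apply/eqP => /(congr1 (fun p : {poly R} => p`_0)).
by rewrite coefB coef1 coefXn coef0 /= eq_sym gtn_eqF // subr0 => /eqP; rewrite oner_eq0.
Qed.

Lemma jtp_coefE N i : (0 < N)%N -> (i <= 2 * N)%N ->
  (jtp N)`_i * qpoch i * qpoch (2 * N - i) = q ^+ jtp_exp N i * qpoch (2 * N).
Proof.
move=> N_gt0; elim: i => [|i IHi] lei2N.
  by rewrite jtp_coef0 /qpoch big_ord0 mulr1 subn0 /jtp_exp leqNgt N_gt0 subn0.
have e2N : (2 * N - i = (2 * N - i.+1).+1)%N by lia.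
have nz : q ^+ N.-1 * (1 - q ^+ (2 * N - i)) != 0.
  by rewrite mulf_neq0 ?expf_neq0 ?polyX_eq0 ?one_subXn_neq0 ?e2N.
apply: (mulIf nz).
have qpochS' : qpoch (2 * N - i) = qpoch (2 * N - i.+1) * (1 - q ^+ (2 * N - i)).
  by rewrite e2N qpochS.
have subXS : q ^+ i - q ^+ (2 * N) = q ^+ i * (1 - q ^+ (2 * N - i)).
  by rewrite mulrBr mulr1 -exprD subnKC // ltnW.
have expS : q ^+ jtp_exp N i.+1 * q ^+ N.-1 = q ^+ jtp_exp N i * q ^+ i.
  by rewrite -!exprD jtp_expS.
move: (jtp_coef_rec i N_gt0) (IHi (ltnW lei2N)); rewrite subXS qpochS qpochS'.
set D := 1 - _ ^+ (2 * N - i); set T0 := _`_i; set T1 := _`_i.+1.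
set P := qpoch (2 * N - i.+1); set Qi := qpoch i; set Q := qpoch (2 * N).
move=> recE IH; transitivity (q ^+ N.-1 * (1 - q ^+ i.+1) * T1 * Qi * P * D).
  by ring.
rewrite recE; transitivity (q ^+ i * D * (T0 * Qi * (P * D))); first by ring.
rewrite IH; transitivity (q ^+ jtp_exp N i * q ^+ i * Q * D); first by ring.
by rewrite -expS; ring.
Qed.

Lemma jtp_coef_gt N i : (0 < N)%N -> (2 * N < i)%N -> (jtp N)`_i = 0.
Proof.
move=> N_gt0; elim: i => // i IHi lt2Ni.
have nz : q ^+ N.-1 * (1 - q ^+ i.+1) != 0.
  by rewrite mulf_neq0 ?expf_neq0 ?polyX_eq0 ?one_subXn_neq0.
suff : q ^+ N.-1 * (1 - q ^+ i.+1) * (jtp N)`_i.+1 == 0.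
  by rewrite mulf_eq0 (negbTE nz) => /eqP.
rewrite jtp_coef_rec //.
case: (ltngtP (2 * N) i) => [lt2N | | ->]; last by rewrite subrr mul0r.
- by rewrite IHi // mulr0.
- by lia.
Qed.

Lemma qpoch_eq_upto n m : (n <= m)%N -> eq_upto n (qpoch m) (qpoch n).
Proof.
move=> lenm; apply: (@eq_upto_prod_ord _ _ _ (fun k => 1 - q ^+ k.+1)) => // k lenk.
by rewrite -mulrN1; apply: eq_upto_addXnM.
Qed.

Lemma jtp_coef_eq_upto n N i : (2 * n + 2 <= N)%N -> (i <= 2 * N)%N ->
  eq_upto n (qpoch n * (jtp N)`_i) (q ^+ jtp_exp N i).
Proof.
move=> leN lei2N; have N_gt0 : (0 < N)%N by lia.
have jtpE := jtp_coefE N_gt0 lei2N.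
have [/andP[leni len2Ni] | far] := boolP ((n <= i) && (n <= 2 * N - i))%N.
  apply: (eq_upto_cancel (qpoch_coef0 n)).
  have -> : qpoch n * (qpoch n * (jtp N)`_i) = (jtp N)`_i * qpoch n * qpoch n by ring.
  apply: (@eq_upto_trans _ _ _ ((jtp N)`_i * qpoch i * qpoch (2 * N - i))).
    by apply: eq_uptoM; [apply: eq_uptoM|]; try apply/eq_upto_sym/qpoch_eq_upto.
  rewrite jtpE [qpoch n * _]mulrC; apply: eq_uptoM => //; apply: qpoch_eq_upto; lia.
have ltn_exp : (n < jtp_exp N i)%N.
  by apply: jtp_exp_gt => //; move: far; rewrite negb_and -!ltnNge.
have jtp0 : eq_upto n ((jtp N)`_i) 0.
  apply: (@eq_upto_mul0 _ _ (qpoch i * qpoch (2 * N - i))).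
    by rewrite coef0M !qpoch_coef0 mulr1.
  by rewrite [_ * (jtp N)`_i]mulrC mulrA jtpE; apply: eq_upto_XnM.
apply: (@eq_upto_trans _ _ _ (0 : {poly R})).
  by rewrite -[X in eq_upto _ _ X](mulr0 (qpoch n)); apply: eq_uptoM.
by apply: eq_upto_sym; rewrite -(mulr1 (q ^+ _)); apply: eq_upto_XnM.
Qed.

Lemma jtp_eq_upto n N (u : R) : (2 * n + 2 <= N)%N ->
  eq_upto n (qpoch n * (jtp N).[u%:P]) (\sum_(i < (2 * N).+1) u ^+ i *: q ^+ jtp_exp N i).
Proof.
move=> leN; have N_gt0 : (0 < N)%N by lia.
rewrite (@horner_coef_wide _ (2 * N).+1); last first.
  by apply/leq_sizeP => i /jtp_coef_gt ->.
rewrite mulr_sumr; apply: eq_upto_sum => i _.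
rewrite -rmorphXn /= mulrA [_ * (u ^+ i)%:P]mulrC mul_polyC; apply: eq_uptoZ.
by apply: jtp_coef_eq_upto; rewrite // -ltnS.
Qed.

End FiniteTripleProduct.

Arguments qpoch {R} m.
Arguments jtp {R} N.

(** * Fifth roots of unity *)

Lemma bin2_mod5 d : (2 <= 'C(d.+1, 2) %% 5)%N -> (d %% 5 = 2)%N.
Proof.
have dbl : (2 * 'C(d.+1, 2) = d.+1 * d)%N.
  by elim: d => // d IHd; rewrite bin2S mulnDr IHd; nia.
have : (2 * ('C(d.+1, 2) %% 5) = (d %% 5).+1 * (d %% 5) %[mod 5])%N.
  by rewrite modnMmr dbl -modnMm -[d.+1]addn1 -[(d %% 5).+1]addn1 -modnDml modnMml.
move: (ltn_pmod d (isT : 0 < 5)%N) (ltn_pmod 'C(d.+1, 2) (isT : 0 < 5)%N).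
move: ('C(d.+1, 2) %% 5)%N (d %% 5)%N => c r.
by case: r => [|[|[|[|[|r]]]]] //; case: c => [|[|[|[|[|c]]]]].
Qed.

Lemma sum_pairs_eq0 (V : zmodType) N (G : nat -> V) :
  (forall i, (i < N)%N -> G i + G (2 * N - i.+1)%N = 0) -> \sum_(i < 2 * N) G i = 0.
Proof.
move=> G_pair; rewrite -(big_mkord xpredT) (@big_cat_nat _ _ _ N) ?leq_pmull //=.
rewrite -{2}[N]add0n big_addn big_nat_rev (_ : 2 * N - N = N)%N; last by lia.
rewrite -big_split big1_seq //= => i; rewrite mem_index_iota => /= ltiN.
by rewrite -[RHS](G_pair (N - i.+1)%N); [congr (G _ + G _); lia | lia].
Qed.

Section FifthRoot.
Variables (R : idomainType) (w : R).
Hypothesis w_prim : 5.-primitive_root w.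
Local Notation q := ('X : {poly R}).

Let u := - w ^+ 2.
Let v := - w ^+ 3.

Let w5 : w ^+ 5 = 1. Proof. exact: prim_expr_order. Qed.

Let uv : u * v = 1. Proof. by rewrite /u /v mulrNN -exprD w5. Qed.

Let u5 : u ^+ 5 = -1.
Proof. by rewrite /u exprNn -exprM mulnC exprM w5 expr1n mulr1 -signr_odd expr1. Qed.

Let u10 : u ^+ 10 = 1. Proof. by rewrite (exprM u 5 2) u5 sqrrN expr1n. Qed.

Let u_neq0 : u != 0.
Proof. by apply/eqP => u0; move: uv; rewrite u0 mul0r => /eqP; rewrite eq_sym oner_eq0. Qed.

Let one_add_u_neq0 : 1 + u != 0.
Proof. by rewrite subr_eq0 eq_sym -(expr0 w) (eq_prim_root_expr w_prim). Qed.

(* The indices i and 2N - 1 - i (i.e. j and -1 - j) carry the same exponent;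
   when it is 2, 3 or 4 mod 5 then i = N + 2 mod 5, so the two powers of u
   differ by u^5 = -1. *)
Lemma jtp_exp_sum_eq0 N m : (2 <= m %% 5)%N -> (m < 'C(N.+1, 2))%N ->
  \sum_(i < (2 * N).+1 | jtp_exp N i == m) u ^+ i = 0.
Proof.
move=> m_mod5 ltmN; rewrite big_mkcond big_ord_recr /=.
rewrite jtp_exp_max (gtn_eqF ltmN) addr0.
apply: (@sum_pairs_eq0 _ _ (fun i => if jtp_exp N i == m then u ^+ i else 0)).
move=> i ltiN; rewrite jtp_exp_sym ?ltn_pmull //; last by lia.
rewrite /jtp_exp leqNgt ltiN /=; case: eqP => [em|]; last by rewrite addr0.
have d_mod5 : ((N - i.+1) %% 5 = 2)%N.
  by apply: bin2_mod5; rewrite -subSn // em.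
have -> : (2 * N - i.+1 = i + 5 + 10 * ((N - i.+1) %/ 5))%N by lia.
by rewrite exprD exprM u10 expr1n mulr1 exprD u5 mulrN1 subrr.
Qed.

Lemma horner_jtp_root5 N : (0 < N)%N ->
  (jtp N).[u%:P] = ((1 + u) * u ^+ N.-1) *:
    (\prod_(k < N) (1 + u *: q ^+ k.+1) * \prod_(k < N.-1) (1 + v *: q ^+ k.+1)).
Proof.
case: N => // n _ /=; rewrite /jtp hornerM !horner_prod.
under eq_bigr do rewrite hornerD hornerZ hornerX hornerC mulrC mul_polyC.
under [X in _ * X]eq_bigr do rewrite hornerD hornerX hornerC.
rewrite [X in _ * X]big_ord_recl /= expr0.
have shift k : u%:P + q ^+ k = u%:P * (1 + v *: q ^+ k).
  by rewrite mulrDr mulr1 mul_polyC scalerA uv scale1r.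
under [X in _ * (_ * X)]eq_bigr do rewrite shift.
rewrite big_split /= prodr_const card_ord -rmorphXn.
rewrite (eq_bigr (fun k : 'I_n => 1 + v *: q ^+ k.+1)) => [|k _]; last first.
  by rewrite /bump add1n.
by rewrite -mul_polyC rmorphM rmorphD rmorph1; ring.
Qed.

Definition cofactor5 : {poly R} := (1 - 'X) * (1 + u *: 'X) * (1 + v *: 'X).

Lemma cofactor5_comp y : cofactor5 \Po y = (1 - y) * (1 + u *: y) * (1 + v *: y).
Proof.
by rewrite /cofactor5 !rmorphM /= !rmorphD !rmorphN /= rmorph1 !linearZ /= comp_polyX.
Qed.

Definition cofactor5_prod K := \prod_(k < K) (cofactor5 \Po q ^+ k.+1).

Lemma cofactor5_prodE K : cofactor5_prod K =
  qpoch K * \prod_(k < K) (1 + u *: q ^+ k.+1) * \prod_(k < K) (1 + v *: q ^+ k.+1).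
Proof.
by rewrite /cofactor5_prod /qpoch -!big_split; apply: eq_bigr => k _; apply: cofactor5_comp.
Qed.

Lemma cofactor5_prod_coef K m : (m <= K)%N -> (2 <= m %% 5)%N -> (cofactor5_prod K)`_m = 0.
Proof.
move=> lemK m_mod5; pose N := (2 * K + 2)%N; have N_gt0 : (0 < N)%N by rewrite /N addn2.
have trunc c M : (K <= M)%N ->
    eq_upto K (\prod_(k < M) (1 + c *: q ^+ k.+1)) (\prod_(k < K) (1 + c *: q ^+ k.+1)).
  move=> leKM; apply: (@eq_upto_prod_ord _ _ _ (fun k => 1 + c *: q ^+ k.+1)) => // k lekK.
  by rewrite -mul_polyC mulrC; apply: eq_upto_addXnM.
have jtpE :
    eq_upto K (qpoch K * (jtp N).[u%:P]) (((1 + u) * u ^+ N.-1) *: cofactor5_prod K).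
  rewrite horner_jtp_root5 // -scalerAr cofactor5_prodE -mulrA; apply: eq_uptoZ.
  by apply: eq_uptoM => //; apply: eq_uptoM; apply: trunc; rewrite /N; lia.
have := eq_upto_trans (eq_upto_sym jtpE) (jtp_eq_upto u (leqnn N)) lemK.
rewrite coefZ coef_sumMXn jtp_exp_sum_eq0 //; last first.
  by rewrite (leq_ltn_trans lemK) // bin2S; lia.
move/eqP; rewrite !mulf_eq0 expf_eq0 (negbTE one_add_u_neq0) (negbTE u_neq0) andbF.
by move/eqP.
Qed.

Let cyclo5 : w + w ^+ 2 + w ^+ 3 + w ^+ 4 = -1.
Proof.
have w_neq1 : w - 1 != 0.
  by rewrite subr_eq0 -{1}(expr1 w) -(expr0 w) (eq_prim_root_expr w_prim).
apply/eqP; rewrite -subr_eq0 opprK -(mulrI_eq0 _ (mulfI w_neq1)).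
by apply/eqP; transitivity (w ^+ 5 - 1); [ring | rewrite w5 subrr].
Qed.

(* The two quadratic factors are 1 - a y + y^2 and 1 - b y + y^2 with
   a + b = ab = -1, whose product is 1 + y + y^2 + y^3 + y^4. *)
Lemma mul_cofactor5 y : (1 - w *: y) * (1 - w ^+ 4 *: y) * (cofactor5 \Po y) = 1 - y ^+ 5.
Proof.
set a := w + w ^+ 4; set b := w ^+ 2 + w ^+ 3.
have ab_sum : a + b = -1 by rewrite -cyclo5 /a /b; ring.
have ab_prod : a * b = -1.
  transitivity (w ^+ 5 * (w + w ^+ 2) + w ^+ 3 + w ^+ 4); first by rewrite /a /b; ring.
  by rewrite w5 mul1r.
have fac1 : (1 - w *: y) * (1 - w ^+ 4 *: y) = 1 - a *: y + w ^+ 5 *: y ^+ 2.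
  by rewrite -!mul_polyC !rmorphD !rmorphXn /=; ring.
have fac2 : (1 + u *: y) * (1 + v *: y) = 1 - b *: y + w ^+ 5 *: y ^+ 2.
  by rewrite /u /v -!mul_polyC !rmorphD !rmorphN !rmorphXn /=; ring.
clearbody a b; have fac12 : (1 - a *: y + y ^+ 2) * (1 - b *: y + y ^+ 2) =
    1 - (a + b) *: y + (2%:R + a * b) *: y ^+ 2 - (a + b) *: y ^+ 3 + y ^+ 4.
  by rewrite -!mul_polyC !rmorphD !rmorphM rmorph1 /=; ring.
rewrite cofactor5_comp -[_ * (1 + v *: y)]mulrA fac2 fac1 mulrCA w5 !scale1r fac12.
by rewrite ab_sum ab_prod -!mul_polyC !rmorphD !rmorphN /= !polyC1; ring.
Qed.

End FifthRoot.

(** * Coefficients supported on residue classes *)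

Section SupportedMod.
Variable R : nzRingType.

Definition supported_mod r (S : seq nat) n (p : {poly R}) :=
  forall m, (m <= n)%N -> (m %% r \notin S)%N -> p`_m = 0.

Lemma supported_mod_cancel r S n (Q V H : {poly R}) : (0 < r)%N -> V`_0 = 1 ->
  eq_upto n (Q * (V \Po 'X^r)) H -> supported_mod r S n H -> supported_mod r S n Q.
Proof.
move=> r_gt0 V0_1 eQH suppH; elim/ltn_ind => m IHm lemn mS.
have := eQH m lemn; rewrite coefM big_ord_recr /= subnn coef_comp_poly_Xn //.
rewrite dvdn0 div0n V0_1 mulr1 big1 ?add0r ?suppH // => j _.
rewrite coef_comp_poly_Xn //; case: ifP => [r_dvd|]; last by rewrite mulr0.
have ltjm := ltn_ord j; rewrite IHm ?mul0r ?(leq_trans (ltnW ltjm)) //.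
by rewrite (_ : j %% r = m %% r)%N //; apply/eqP; rewrite eq_sym eqn_mod_dvd // ltnW.
Qed.

Lemma supported_modM r S T n (p q : {poly R}) :
  supported_mod r S n p -> supported_mod r T n q ->
  (n %% r \notin [seq (s + t) %% r | s <- S, t <- T])%N -> (p * q)`_n = 0.
Proof.
move=> supp suppq nST; rewrite coefM big1 // => i _; have lein := leq_ord i.
have [iS|iS] := boolP (i %% r \in S)%N; last by rewrite supp ?mul0r.
have [niT|niT] := boolP ((n - i) %% r \in T)%N; last by rewrite suppq ?mulr0 ?leq_subr.
move: nST; rewrite -[n in (n %% r)%N](subnKC lein) -modnDm.
by rewrite (allpairs_f (fun s t => (s + t) %% r)%N iS niT).
Qed.

Lemma supported_mod_comp_Xn r S c n (p : {poly R}) : (0 < c)%N ->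
  supported_mod r S (n %/ c) p ->
  supported_mod r [seq (s * c) %% r | s <- S]%N n (p \Po 'X^c).
Proof.
move=> c_gt0 supp m lemn mS; rewrite coef_comp_poly_Xn //; case: ifP => // c_dvd.
rewrite supp ?leq_div2r //; apply: contra mS => tS.
by rewrite -(divnK c_dvd) -modnMml (map_f (fun s => (s * c) %% r)%N tS).
Qed.

End SupportedMod.

(** * Generating functions of 4-colored partitions *)

Section ColoredGF.
Variable R : comNzRingType.

Definition trunc_geom n (z : R) k : {poly R} := \sum_(j < n.+1) z ^+ j *: 'X^(k * j).

Lemma trunc_geom_inv n (z : R) k : (0 < k)%N ->
  eq_upto n ((1 - z *: 'X^k) * trunc_geom n z k) 1.
Proof.
move=> k_gt0; have -> : trunc_geom n z k = \sum_(j < n.+1) (z *: 'X^k) ^+ j.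
  by apply: eq_bigr => j _; rewrite exprZn -exprM.
rewrite -opprB mulNr -subrX1 opprB exprZn -exprM -scaleNr -mul_polyC mulrC.
by apply: eq_upto_addXnM; rewrite mulnS; have := leq_pmull n k_gt0; lia.
Qed.

Definition mpart_gf n c (z : R) : {poly R} :=
  \sum_(m : mpart n | Defs.pdiv c m) z ^+ plen m *: 'X^(psum m).

Lemma mpart_gf_prod n c z :
  mpart_gf n c z = \prod_(i < n | (c %| i.+1)%N) trunc_geom n z i.+1.
Proof.
pose f (i : 'I_n) (j : 'I_n.+1) : {poly R} :=
  if (c %| i.+1)%N then z ^+ j *: 'X^(i.+1 * j) else (j == 0 :> nat)%:R.
transitivity (\prod_(i < n) \sum_(j < n.+1) f i j); last first.
  rewrite [RHS]big_mkcond; apply: eq_bigr => i _; rewrite /f; case: ifP => // _.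
  by rewrite big_ord_recl big1 ?addr0 // => j _.
rewrite bigA_distr_bigA /mpart_gf big_mkcond /=; apply: eq_bigr => m _.
case: ifP => [c_div | /negbT]; last first.
  rewrite negb_forall => /existsP[i]; rewrite negb_imply => /andP[mi_gt0 c_ndvd].
  by rewrite (bigD1 i) //= /f (negbTE c_ndvd) (gtn_eqF mi_gt0) mul0r.
rewrite (eq_bigr (fun i => (z ^+ m i)%:P * 'X^(i.+1 * m i))) => [|i _].
  by rewrite big_split /= -rmorph_prod /= !prodrXr mul_polyC.
rewrite /f -mul_polyC; case: ifP => // c_ndvd.
have mi0 : m i = 0 :> nat.
  by move/forallP/(_ i): c_div; rewrite c_ndvd implybF lt0n negbK => /eqP.
by rewrite mi0 muln0 !expr0 mulr1 polyC1.
Qed.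

Lemma coef_colored4_gf n c d (z1 z2 : R) :
  (mpart_gf n c z1 * mpart_gf n c z2 * mpart_gf n d z1 * mpart_gf n d z2)`_n =
  \sum_(q in colored4 c d n)
    z1 ^+ plen (q_r q) * z2 ^+ plen (q_b q) * z1 ^+ plen (q_y q) * z2 ^+ plen (q_o q).
Proof.
have XnZM a b i j : (a *: 'X^i) * (b *: 'X^j) = (a * b) *: 'X^(i + j) :> {poly R}.
  by rewrite -scalerAl -scalerAr scalerA exprD.
rewrite /mpart_gf !(big_mkcond (fun m : mpart n => Defs.pdiv _ m)) /=.
rewrite big_distrlr pair_bigA big_distrlr pair_bigA big_distrlr pair_bigA.
rewrite coef_sum [RHS]big_mkcond /=.
apply: eq_bigr => -[[[r b] y] o] _; rewrite /colored4 inE /q_r /q_b /q_y /q_o /=.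
case: (Defs.pdiv c r); last by rewrite !(mul0r, mulr0) coef0.
case: (Defs.pdiv c b); last by rewrite !(mul0r, mulr0) coef0.
case: (Defs.pdiv d y); last by rewrite !(mul0r, mulr0) coef0.
case: (Defs.pdiv d o); last by rewrite !(mul0r, mulr0) coef0.
by rewrite !XnZM coefZ coefXn eq_sym; case: eqP; rewrite ?mulr1 ?mulr0.
Qed.

Lemma rank4_mod5 N (q : quad N) k : (k < 5)%N ->
  (rank4 q == k %[mod 5])%Z =
  ((plen (q_r q) + 4 * plen (q_b q) + plen (q_y q) + 4 * plen (q_o q)) %% 5 == k)%N.
Proof. by move=> ltk5; rewrite /rank4; apply/idP/idP => /eqP rankE; apply/eqP; lia. Qed.

Lemma colored4_rank_sum n c d (z : R) : z ^+ 5 = 1 ->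
  \sum_(q in colored4 c d n) z ^+ plen (q_r q) * (z ^+ 4) ^+ plen (q_b q) *
    z ^+ plen (q_y q) * (z ^+ 4) ^+ plen (q_o q) =
  \sum_(k < 5) (N_cd c d k n)%:R * z ^+ k.
Proof.
move=> z5; rewrite /N_cd.
under [RHS]eq_bigr do rewrite -sum1_card natr_sum big_distrl /=.
rewrite (exchange_big_dep (fun q => q \in colored4 c d n)) => [|k q]; last first.
  by move=> _; rewrite inE => /andP[].
apply: eq_bigr => q qC; rewrite -!exprM -!exprD -(expr_mod _ z5).
set e := (_ + _)%N; have lte5 : (e %% 5 < 5)%N by rewrite ltn_mod.
rewrite (bigD1 (Ordinal lte5)) /=; last by rewrite inE qC rank4_mod5 //= eqxx.
rewrite mul1r big1 ?addr0 // => k; rewrite inE qC rank4_mod5 //= => /andP[/eqP ek].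
by rewrite -val_eqE /= -ek eqxx.
Qed.

Lemma colored4_card_sum c d n :
  (p_c2d2 c d n)%:R = \sum_(k < 5) (N_cd c d k n)%:R :> R.
Proof.
have := colored4_rank_sum n c d (expr1n R 5).
under [RHS]eq_bigr do rewrite expr1n mulr1.
move=> <-; rewrite /p_c2d2 -sum1_card natr_sum.
by apply: eq_bigr => q _; rewrite !expr1n !mulr1.
Qed.

End ColoredGF.

Section GfSupport.
Variables (R : idomainType) (w : R).
Hypothesis w_prim : 5.-primitive_root w.

Lemma cofactor5_prod_supported K : supported_mod 5 [:: 0; 1] K (cofactor5_prod w K).
Proof.
move=> m lemK; rewrite !inE negb_or => /andP[m0 m1].
by apply: cofactor5_prod_coef => //; lia.
Qed.

Lemma cofactor5_prod_comp_Xn c n : (0 < c)%N ->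
  \prod_(i < n | (c %| i.+1)%N) (cofactor5 w \Po 'X^(i.+1)) =
  cofactor5_prod w (n %/ c) \Po 'X^c.
Proof.
move=> c_gt0; elim: n => [|n IHn].
  by rewrite big_ord0 div0n /cofactor5_prod big_ord0 rmorph1.
rewrite big_mkcond big_ord_recr -big_mkcond /= IHn (divnS _ c_gt0).
case: ifP => [c_dvd|]; last by rewrite mulr1.
have := divnK c_dvd; rewrite (divnS _ c_gt0) c_dvd add1n => nE.
rewrite /cofactor5_prod big_ord_recr [RHS]comp_polyM -comp_polyA comp_Xn_poly.
by rewrite -exprM mulnC nE.
Qed.

Lemma mpart_gf_supported c n : (0 < c)%N ->
  supported_mod 5 [:: 0; c %% 5]%N n (mpart_gf n c w * mpart_gf n c (w ^+ 4)).
Proof.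
move=> c_gt0.
apply: (@supported_mod_cancel _ _ _ _ _ (\prod_(i < n | (c %| i.+1)%N) (1 - 'X^(i.+1)))
  (\prod_(i < n | (c %| i.+1)%N) (cofactor5 w \Po 'X^(i.+1)))) => //.
- rewrite -horner_coef0 horner_prod big1 // => i _.
  by rewrite hornerD hornerN hornerC hornerXn expr0n subr0.
- rewrite !mpart_gf_prod rmorph_prod -!big_split; apply: eq_upto_prod => i _ /=.
  rewrite rmorphB rmorph1 /= comp_Xn_poly -exprM mulnC exprM -(mul_cofactor5 w_prim).
  rewrite -[X in eq_upto _ _ X]mul1r -[X in eq_upto _ _ (X * _)]mul1r !mulrA.
  apply: eq_uptoM => //; rewrite -mulrA mulrACA.
  by apply: eq_uptoM; rewrite mulrC; apply: trunc_geom_inv.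
- rewrite cofactor5_prod_comp_Xn //.
  have := supported_mod_comp_Xn c_gt0 (@cofactor5_prod_supported (n %/ c)%N).
  by rewrite /= mul0n mul1n.
Qed.

End GfSupport.

Lemma N_cd_dft_eq0 (R : idomainType) (z : R) c d n : 5.-primitive_root z ->
  (0 < c)%N -> (0 < d)%N -> (n %% 5 \notin [:: 0; c %% 5; d %% 5; (c + d) %% 5])%N ->
  \sum_(k < 5) (N_cd c d k n)%:R * z ^+ k = 0.
Proof.
move=> z_prim c_gt0 d_gt0 n_mod5.
rewrite -colored4_rank_sum ?(prim_expr_order z_prim) // -coef_colored4_gf -mulrA.
apply: (supported_modM (mpart_gf_supported z_prim c_gt0) (mpart_gf_supported z_prim d_gt0)).
apply: contra n_mod5; rewrite /= !inE !add0n !addn0 !modn_mod modnDm mod0n.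
by case/or4P=> ->; rewrite ?orbT.
Qed.

(** * Finite Fourier inversion *)

Lemma sum_prim_root_expr (R : idomainType) r (z : R) m : r.-primitive_root z ->
  \sum_(j < r) (z ^+ m) ^+ j = if (r %| m)%N then r%:R else 0.
Proof.
move=> z_prim; rewrite (prim_order_dvd z_prim); case: eqP => [-> | zm_neq1].
  by rewrite (eq_bigr (fun _ => 1)) ?sumr_const ?card_ord // => j _; rewrite expr1n.
apply/eqP; rewrite -(mulrI_eq0 _ (mulfI (_ : z ^+ m - 1 != 0))) ?subr_eq0; last exact/eqP.
by rewrite -subrX1 -exprM mulnC exprM (prim_expr_order z_prim) expr1n subrr.
Qed.

Lemma dft_inversion (R : idomainType) r (z : R) (a : nat -> R) k :
  r.-primitive_root z ->
  (forall j, (0 < j < r)%N -> \sum_(i < r) a i * (z ^+ j) ^+ i = 0) ->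
  (k < r)%N -> r%:R * a k = \sum_(i < r) a i.
Proof.
move=> z_prim a_dft ltkr; have r_gt0 := prim_order_gt0 z_prim.
pose F j := (\sum_(i < r) a i * (z ^+ j) ^+ i) * (z ^+ j) ^+ (r - k).
transitivity (\sum_(j < r) F j); last first.
  rewrite -(big_mkord xpredT F) (big_ltn r_gt0) big1_seq ?addr0 => [|j /andP[_]].
    by rewrite /F !expr1n mulr1; under eq_bigr do rewrite expr1n mulr1.
  by rewrite mem_index_iota => /andP[j_gt0 ltjr]; rewrite /F a_dft ?j_gt0 // mul0r.
have dvd_shift i : (i < r)%N -> (r %| i + (r - k))%N = (i == k).
  move=> ltir; rewrite /dvdn -[X in _ == X](mod0n r) -(eqn_modDr k) -addnA subnK 1?ltnW //.
  by rewrite modnDr add0n !modn_small.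
rewrite /F; under eq_bigr do rewrite big_distrl /=.
rewrite exchange_big /=.
under eq_bigr do under eq_bigr do
  rewrite -mulrA -!exprM -exprD -mulnDr mulnC exprM.
under eq_bigr do rewrite -big_distrr /= sum_prim_root_expr //.
rewrite (bigD1 (Ordinal ltkr)) //= dvd_shift // eqxx mulrC big1 ?addr0 // => i ne_ik.
by move: ne_ik; rewrite dvd_shift // -val_eqE => /negbTE ->; rewrite mulr0.
Qed.

Lemma N_cd_uniform c d k n : (0 < c)%N -> (0 < d)%N -> (k < 5)%N ->
  (n %% 5 \notin [:: 0; c %% 5; d %% 5; (c + d) %% 5])%N ->
  (5 * N_cd c d k n)%N = p_c2d2 c d n.
Proof.
move=> c_gt0 d_gt0 ltk5 n_mod5; have [w w_prim] := C_prim_root_exists (isT : (0 < 5)%N).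
apply/eqP; rewrite -(eqr_nat algC) natrM (colored4_card_sum algC); apply/eqP.
apply: (dft_inversion (a := fun k => (N_cd c d k n)%:R) w_prim) => // l /andP[l_gt0 ltl5].
apply: N_cd_dft_eq0 => //; rewrite prim_root_exp_coprime //.
by case: l l_gt0 ltl5 => [|[|[|[|[|l]]]]].
Qed.

Lemma a_valsE i j : (i < 5)%N -> (j < 5)%N ->
  a_vals i j = [seq a <- [:: 1; 2; 3; 4] | a \notin [:: i; j; (i + j) %% 5]]%N.
Proof. by case: i => [|[|[|[|[|i]]]]] //; case: j => [|[|[|[|[|j]]]]]. Qed.

Lemma a_vals_mod5 c d a n : a \in a_vals (c %% 5) (d %% 5) ->
  ((5 * n + a) %% 5 \notin [:: 0; c %% 5; d %% 5; (c + d) %% 5])%N.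
Proof.
rewrite a_valsE ?ltn_pmod // mem_filter modnDm mulnC modnMDl => /andP[a_notin a_in].
have /andP[a_lt5 a_neq0] : ((a < 5) && (a != 0))%N.
  by move: a_in; rewrite !inE => /or4P[] /eqP->.
by rewrite modn_small // in_cons (negbTE a_notin) orbF.
Qed.

Local Close Scope ring_scope.

Theorem theorem3p3 (c d i j a : nat) :
  1 <= c -> c <= d ->
  c %% 5 = i -> d %% 5 = j ->
  a \in a_vals i j ->
  forall n k : nat, k <= 4 ->
    ((N_cd c d k (5 * n + a))%:R = (p_c2d2 c d (5 * n + a))%:R / 5%:R :> rat)%R
    /\ 5 %| p_c2d2 c d (5 * n + a).
Proof.
move=> c_gt0 le_cd <- <- a_cd n k le_k4.
have uniform : 5 * N_cd c d k (5 * n + a) = p_c2d2 c d (5 * n + a).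
  by apply: N_cd_uniform (a_vals_mod5 n a_cd) => //; apply: leq_trans le_cd.
split; last by rewrite -uniform dvdn_mulr.
by rewrite -uniform natrM mulrAC divff ?mul1r // pnatr_eq0.
Qed.
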